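(* Let $L$ be a finite lattice and $\varphi\in M_\infty(L)$. Then for all $n\ge1$ and $a_1,\dots,a_n\in L$, $\Lambda_{a_1,\ldots,a_n}\varphi=\nabla_{a_1,\ldots,a_n}\varphi$.
   Context: $L$ is a finite lattice with meet $\wedge$ and join $\vee$. $\nabla_a\varphi(x)=\varphi(x)-\varphi(x\wedge a)$, $\nabla_{a_1,\ldots,a_n}\varphi=\nabla_{a_n}(\nabla_{a_1,\ldots,a_{n-1}}\varphi)$; $\varphi$ is completely monotone if all $\nabla_{a_1,\dots,a_n}\varphi\ge0$. $M_\infty(L)$ is the set of nonnegative completely monotone functions on $L$ (these are monotone). A path from $a$ to $b$ is a sequence $H=(h_0,\dots,h_m)$ of distinct elements with $h_0=a$, $h_m=b$; $\varphi(H)=\sum_{i=0}^m\varphi(h_i)-\sum_{i=1}^m\varphi(h_{i-1}\vee h_i)$; $\lambda(\varphi;a,b)=\max\{\varphi(H): H\text{ a path from }a\text{ to }b\}$; $\Lambda_a\varphi(x)=\varphi(x)-\lambda(\varphi;a,x)$ and $\Lambda_{a_1,\ldots,a_n}\varphi=\Lambda_{a_n}(\Lambda_{a_1,\ldots,a_{n-1}}\varphi)$. *)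

From HB Require Import structures.
From mathcomp Require Import all_boot all_order all_algebra.
Set Implicit Arguments. Unset Strict Implicit. Unset Printing Implicit Defensive.
Import Order.TTheory GRing.Theory Num.Theory.
Local Open Scope ring_scope.

Section Defs.
Variables (d : Order.disp_t) (L : finLatticeType d) (R : realFieldType).

Definition nabla (a : L) (phi : L -> R) : L -> R :=
  fun x => phi x - phi (Order.meet x a).

Definition nablas (s : seq L) (phi : L -> R) : L -> R :=
  foldl (fun f a => nabla a f) phi s.

Definition completely_monotone (phi : L -> R) : Prop :=
  forall (s : seq L) (x : L), s != [::] -> 0 <= nablas s phi x.

Definition M_infty (phi : L -> R) : Prop :=
  (forall x, 0 <= phi x) /\ completely_monotone phi.

Definition is_path (a b : L) (H : seq L) : bool :=
  [&& H != [::], uniq H, head a H == a & last a H == b].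

Definition phi_path (phi : L -> R) (H : seq L) : R :=
  \sum_(h <- H) phi h - \sum_(p <- zip H (behead H)) phi (Order.join p.1 p.2).

(* all duplicate-free-candidate sequences of length 1 .. #|L|
   (every path has length at most #|L|) *)
Definition path_cands : seq (seq L) :=
  flatten [seq [seq tval t | t <- enum {: k.-tuple L}] | k <- iota 1 #|L|].

(* a canonical path from a to b, used as initial value of the max *)
Definition trivial_path (a b : L) : seq L :=
  if a == b then [:: a] else [:: a; b].

Definition lambda (phi : L -> R) (a b : L) : R :=
  \big[Num.max/phi_path phi (trivial_path a b)]_(H <- path_cands | is_path a b H)
     phi_path phi H.

Definition Lambda (a : L) (phi : L -> R) : L -> R :=
  fun x => phi x - lambda phi a x.

Definition Lambdas (s : seq L) (phi : L -> R) : L -> R :=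
  foldl (fun f a => Lambda a f) phi s.

End Defs.

From HB Require Import structures.
From mathcomp Require Import lra.
From mathcomp Require Import all_boot all_order all_algebra.
From Stdlib Require Import FunctionalExtensionality.
Set Implicit Arguments. Unset Strict Implicit. Unset Printing Implicit Defensive.
Import Order.TTheory GRing.Theory Num.Theory.
Local Open Scope ring_scope.

(* For completely monotone [phi] the second-order inequality
   phi(c /\ y) - phi(c /\ z) <= phi(y \/ z) - phi(z) lets the value of a path
   telescope: phi(h_0, ..., h_m) <= phi(h_0 /\ h_m).  The bound is attained by
   the path (a, a /\ x, x) (or by (a, x) when a and x are comparable), so
   lambda(phi; a, x) = phi(a /\ x) and Lambda_a phi = nabla_a phi.  Since
   nabla_a preserves complete monotonicity, the identity iterates. *)

Section LambdaNabla.
Variables (d : Order.disp_t) (L : finLatticeType d) (R : realFieldType).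
Implicit Types (phi : L -> R) (a c x y z : L).

Lemma nabla_ge0_homo phi : (forall a x, 0 <= nabla a phi x) ->
  {homo phi : u v / (u <= v)%O >-> u <= v}.
Proof.
by move=> ge0 u v uv; have := ge0 u v; rewrite /nabla (meet_r uv) subr_ge0.
Qed.

Lemma completely_monotone_nabla phi a :
  completely_monotone phi -> completely_monotone (nabla a phi).
Proof. by move=> cm s x _; exact: (cm (a :: s)). Qed.

Lemma completely_monotone_homo phi : completely_monotone phi ->
  {homo phi : u v / (u <= v)%O >-> u <= v}.
Proof. by move=> cm; apply: nabla_ge0_homo => a x; exact: (cm [:: a]). Qed.

Lemma completely_monotone_meet_sub_le phi c y z : completely_monotone phi ->
  phi (Order.meet c y) - phi (Order.meet c z) <= phi (Order.join y z) - phi z.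
Proof.
(* Chain through nabla_z phi (c /\ y) <= nabla_z phi y <= nabla_z phi (y \/ z),
   using that nabla_z phi is monotone. *)
move=> cm.
have phi_homo := completely_monotone_homo cm.
have nabla_homo := completely_monotone_homo (completely_monotone_nabla z cm).
have meet_le : phi (Order.meet (Order.meet c y) z) <= phi (Order.meet c z).
  by apply: phi_homo; rewrite -meetA leI2 // leIr.
apply: le_trans (_ : nabla z phi (Order.meet c y) <= _).
  by rewrite /nabla lerD2l lerN2.
apply: le_trans (_ : nabla z phi y <= _); first by apply: nabla_homo; rewrite leIr.
by have := nabla_homo _ _ (leUl y z); rewrite /nabla (meet_r (leUr z y)).
Qed.

Lemma phi_path1 phi h : phi_path phi [:: h] = phi h.
Proof. by rewrite /phi_path /= big_seq1 big_nil subr0. Qed.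

Lemma phi_path_cons2 phi h h1 t : phi_path phi [:: h, h1 & t] =
  phi h - phi (Order.join h h1) + phi_path phi (h1 :: t).
Proof. by rewrite /phi_path /= !big_cons /=; lra. Qed.

Lemma phi_path_le_meet_last phi h t : completely_monotone phi ->
  phi_path phi (h :: t) <= phi (Order.meet h (last h t)).
Proof.
move=> cm; elim: t h => [|h1 t IH] h /=; first by rewrite phi_path1 meetxx.
have step := completely_monotone_meet_sub_le (last h1 t) h1 h cm.
rewrite meetC [Order.meet _ h]meetC joinC in step.
by rewrite phi_path_cons2; have := IH h1; lra.
Qed.

Lemma phi_path_comparable phi a x : (a >=< x)%O ->
  phi_path phi (trivial_path a x) = phi (Order.meet a x).
Proof.
rewrite /trivial_path; case: eqP => [<-|_] cmp; first by rewrite phi_path1 meetxx.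
rewrite phi_path_cons2 phi_path1; case/orP: cmp => c.
  by rewrite (join_r c) (meet_l c) addrNK.
by rewrite (join_l c) (meet_r c) subrr add0r.
Qed.

Lemma phi_path_meet_detour phi a x :
  phi_path phi [:: a; Order.meet a x; x] = phi (Order.meet a x).
Proof.
rewrite !phi_path_cons2 phi_path1 (join_l (leIl a x)) meetC (join_r (leIl x a)).
by lra.
Qed.

Lemma uniq_meet_detour a x : ~~ (a >=< x)%O -> uniq [:: a; Order.meet a x; x].
Proof.
move=> incmp; have ax : a != x by apply: contraNneq incmp => ->; rewrite comparablexx.
move: incmp; rewrite negb_or => /andP[/negbTE nax /negbTE nxa].
by rewrite /= !inE eq_sym eq_meetl eq_meetr nax nxa (negbTE ax).
Qed.

Lemma mem_path_cands (H : seq L) : uniq H -> H != [::] -> H \in path_cands L.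
Proof.
move=> Huniq H0; apply/flattenP; exists [seq tval t | t <- enum {: (size H).-tuple L}].
  apply/mapP; exists (size H) => //; rewrite mem_iota lt0n size_eq0 H0 add1n ltnS.
  by rewrite cardE; apply: uniq_leq_size Huniq _ => y _; exact: mem_enum.
by apply/mapP; exists (in_tuple H); rewrite ?mem_enum.
Qed.

Lemma lambda_meet phi a x : completely_monotone phi ->
  lambda phi a x = phi (Order.meet a x).
Proof.
move=> cm; apply/le_anti/andP; split.
  apply: bigmax_le => [|[//|h t] /and4P[_ _ /eqP /= -> /eqP /= <-]].
    by rewrite /trivial_path; case: eqP => [<-|_]; exact: phi_path_le_meet_last.
  exact: phi_path_le_meet_last.
have [cmp|incmp] := boolP (a >=< x)%O.
  by rewrite -(phi_path_comparable phi cmp) bigmax_ge_id.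
have Huniq := uniq_meet_detour incmp.
apply: (bigmax_sup_seq _ _ _ _ _ (mem_path_cands Huniq isT)).
  by rewrite /is_path Huniq /= !eqxx.
by rewrite phi_path_meet_detour.
Qed.

Lemma Lambda_nabla phi a : completely_monotone phi -> Lambda a phi = nabla a phi.
Proof.
move=> cm; apply: functional_extensionality => x.
by rewrite /Lambda /nabla lambda_meet // meetC.
Qed.

Lemma Lambdas_nablas s phi : completely_monotone phi -> Lambdas s phi = nablas s phi.
Proof.
elim: s phi => [//|a s IH] phi cm.
rewrite /Lambdas /nablas /= Lambda_nabla //.
exact: IH (completely_monotone_nabla a cm).
Qed.

End LambdaNabla.

Theorem lemma3p16 (d : Order.disp_t) (L : finLatticeType d) (R : realFieldType)
  (phi : L -> R) :
  M_infty phi ->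
  forall (s : seq L), (1 <= size s)%N ->
  forall x : L, Lambdas s phi x = nablas s phi x.
Proof. by move=> [_ cm] s _ x; rewrite Lambdas_nablas. Qed.
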